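(* Let $\mathcal L=(\Sigma,X)$ be a language, $\Lambda$ a fuzzy theory in $\mathcal L$ and $\phi$ a formula of $\mathcal L$. Then $\mathcal A\vDash\phi$ for every $\Sigma$-algebra $\mathcal A$ that is a model of $\Lambda$ if and only if $\vdash_\Lambda\phi$.
   Context: $H$ is a frame with bottom $\bot$. An $H$-fuzzy set is a pair $(A,\mu_A)$ of a set $A$ and a function $\mu_A:A\to H$; an arrow $f:(A,\mu_A)\to(B,\mu_B)$ is a function with $\mu_A(x)\le\mu_B(f(x))$; they form $\mathbf{Fuz}_H$. For $n\ge1$, $(A,\mu_A)^n=(A^n,\mu)$ with $\mu(a_1,\dots,a_n)=\bigwedge_i\mu_A(a_i)$. A signature $\Sigma=(O,\mathrm{ar},C)$ consists of a set $O$ of operation symbols with arity $\mathrm{ar}:O\to\{1,2,3,\dots\}$ and a set $C$ of constant symbols. A language is a pair $\mathcal L=(\Sigma,X)$ with $X$ a set of variables. $\mathrm{Terms}(\mathcal L)$ is the smallest set containing $X\sqcup C$ and containing $f(t_1,\dots,t_{\mathrm{ar}(f)})$ whenever $f\in O$ and all $t_i\in\mathrm{Terms}(\mathcal L)$. A formula is either an equation $s\equiv t$ ($s,t$ terms) or a membership proposition $\mathsf E_l(t)$ with $l\in H$ and $t$ a term. A sequent $\Gamma\vdash\psi$ is a pair of a (possibly infinite) set $\Gamma$ of formulas and a formula $\psi$; $\vdash\psi$ means $\emptyset\vdash\psi$. A fuzzy theory in $\mathcal L$ is a set of sequents. For $\sigma:X\to\mathrm{Terms}(\mathcal L)$, $t[\sigma]$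 is simultaneous substitution, extended to formulas by $(s\equiv t)[\sigma]=(s[\sigma]\equiv t[\sigma])$, $\mathsf E_l(t)[\sigma]=\mathsf E_l(t[\sigma])$, and to sets of formulas elementwise. The rules of the fuzzy sequent calculus are (for all sets of formulas $\Gamma,\Delta,\Phi$, formulas $\phi,\psi$, terms, $l,l'\in H$): (A) $\Gamma\vdash\phi$ if $\phi\in\Gamma$; (Weak) from $\Gamma\vdash\phi$ infer $\Gamma\cup\Delta\vdash\phi$; (Cut) from $\Gamma\vdash\phi$ for all $\phi\in\Phi$ and $\Phi\vdash\psi$ infer $\Gamma\vdash\psi$; (Refl) $\Gamma\vdash s\equiv s$; (Sym) from $\Gamma\vdash s\equiv t$ infer $\Gamma\vdash t\equiv s$; (Trans) from $\Gamma\vdash s\equiv t$ and $\Gamma\vdash t\equiv u$ infer $\Gamma\vdash s\equiv u$; (Sub) from $\Gamma\vdash\psi$ infer $\Gamma[\sigma]\vdash\psi[\sigma]$ for any $\sigma:X\to\mathrm{Terms}(\mathcal L)$; (Cong) for $f\in O$ with $n=\mathrm{ar}(f)$, from $\Gamma\vdash t_i\equiv s_i$ ($i=1,\dots,n$) infer $\Gamma\vdash f(t_1,\dots,t_n)\equiv f(s_1,\dots,s_n)$; (Inf) $\Gamma\vdash\mathsf E_\bot(t)$; (Mon) from $\Gamma\vdash\mathsf E_l(t)$ infer $\Gamma\vdash\mathsf E_{l\wedge l'}(t)$; (Exp) for $f\in O$ with $n=\mathrm{ar}(f)$, from $\Gamma\vdash\mathsf E_{l_i}(t_i)$ ($i=1,\dots,n$)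 infer $\Gamma\vdash\mathsf E_{l_1\wedge\dots\wedge l_n}(f(t_1,\dots,t_n))$; (Sup) for $S\subseteq H$, from $\Gamma\vdash\mathsf E_l(t)$ for all $l\in S$ infer $\Gamma\vdash\mathsf E_{\sup S}(t)$; (Fun) from $\Gamma\vdash t\equiv s$ and $\Gamma\vdash\mathsf E_l(t)$ infer $\Gamma\vdash\mathsf E_l(s)$. The deductive closure $\Lambda^{\vdash}$ of a theory $\Lambda$ is the smallest set of sequents containing $\Lambda$ and closed under all these rules; $\vdash_\Lambda\phi$ means $(\emptyset\vdash\phi)\in\Lambda^{\vdash}$. A $\Sigma$-algebra $\mathcal A=((A,\mu_A),\Sigma^{\mathcal A})$ is an $H$-fuzzy set $(A,\mu_A)$ together with, for each $f\in O$, an arrow $f^{\mathcal A}:(A,\mu_A)^{\mathrm{ar}(f)}\to(A,\mu_A)$ of $\mathbf{Fuz}_H$ and, for each $c\in C$, an element $c^{\mathcal A}\in A$. An assignment is a function $\iota:X\to A$; evaluation: $x^{\mathcal A,\iota}=\iota(x)$, $c^{\mathcal A,\iota}=c^{\mathcal A}$, $f(t_1,\dots,t_n)^{\mathcal A,\iota}=f^{\mathcal A}(t_1^{\mathcal A,\iota},\dots,t_n^{\mathcal A,\iota})$. $\mathcal A\vDash_\iota s\equiv t$ iff $s^{\mathcal A,\iota}=t^{\mathcal A,\iota}$; $\mathcal A\vDash_\iota\mathsf E_l(t)$ iff $l\le\mu_A(t^{\mathcal A,\iota})$; $\mathcal A\vDash\phi$ iff $\mathcal A\vDash_\iota\phi$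 for all assignments $\iota$. $\mathcal A$ satisfies $\Gamma\vdash\psi$ if for every assignment $\iota$ with $\mathcal A\vDash_\iota\phi$ for all $\phi\in\Gamma$ one has $\mathcal A\vDash_\iota\psi$. $\mathcal A$ is a model of a theory $\Lambda$ if it satisfies every sequent of $\Lambda$. *)

From mathcomp Require Import all_boot.
Set Implicit Arguments. Unset Strict Implicit. Unset Printing Implicit Defensive.

Record frame := Frame {
  fcar :> Type;
  fle : fcar -> fcar -> Prop;
  fle_refl : forall a, fle a a;
  fle_trans : forall a b c, fle a b -> fle b c -> fle a c;
  fle_antisym : forall a b, fle a b -> fle b a -> a = b;
  fmeet : fcar -> fcar -> fcar;
  fmeet_l : forall a b, fle (fmeet a b) a;
  fmeet_r : forall a b, fle (fmeet a b) b;
  fmeet_glb : forall a b c, fle c a -> fle c b -> fle c (fmeet a b);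
  fsup : (fcar -> Prop) -> fcar;
  fsup_ub : forall (S : fcar -> Prop) s, S s -> fle s (fsup S);
  fsup_lub : forall (S : fcar -> Prop) c, (forall s, S s -> fle s c) -> fle (fsup S) c;
  fdistr : forall a (S : fcar -> Prop),
    fmeet a (fsup S) = fsup (fun y => exists s, S s /\ y = fmeet a s)
}.

Section FrameDefs.
Variable H : frame.
Definition fbot : H := @fsup H (fun _ : H => False).
Definition finf (S : H -> Prop) : H := fsup (fun l => forall s, S s -> fle l s).
Definition fmeetn n (g : 'I_n -> H) : H := finf (fun x => exists i, x = g i).
End FrameDefs.

Record signature := Signature {
  op_sym : Type;
  ar : op_sym -> nat;
  ar_pos : forall f, 0 < ar f;
  const_sym : Type
}.

Section Syntax.
Variables (Sg : signature) (X : Type).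

Inductive term : Type :=
| TVar : X -> term
| TConst : const_sym Sg -> term
| TOp : forall f : op_sym Sg, ('I_(ar f) -> term) -> term.

Fixpoint tsubst (sigma : X -> term) (t : term) : term :=
  match t with
  | TVar x => sigma x
  | TConst c => TConst c
  | TOp f args => @TOp f (fun i => tsubst sigma (args i))
  end.

Variable H : frame.

Inductive formula : Type :=
| FEq : term -> term -> formula
| FMem : H -> term -> formula.

Definition fsubst (sigma : X -> term) (phi : formula) : formula :=
  match phi with
  | FEq s t => FEq (tsubst sigma s) (tsubst sigma t)
  | FMem l t => FMem l (tsubst sigma t)
  end.

Definition fset := formula -> Prop.
Definition fset_empty : fset := fun _ => False.
Definition fset_union (G D : fset) : fset := fun phi => G phi \/ D phi.
Definition fset_subst (sigma : X -> term) (G : fset) : fset :=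
  fun phi => exists phi', G phi' /\ phi = fsubst sigma phi'.

(* a fuzzy theory: a set of sequents (Gamma |- psi) *)
Definition theory := fset -> formula -> Prop.

Inductive deriv (Lam : theory) : fset -> formula -> Prop :=
| D_theory : forall G psi, Lam G psi -> deriv Lam G psi
| D_A : forall (G : fset) phi, G phi -> deriv Lam G phi
| D_Weak : forall G D phi, deriv Lam G phi -> deriv Lam (fset_union G D) phi
| D_Cut : forall G (Phi : fset) psi,
    (forall phi, Phi phi -> deriv Lam G phi) -> deriv Lam Phi psi -> deriv Lam G psi
| D_Refl : forall G s, deriv Lam G (FEq s s)
| D_Sym : forall G s t, deriv Lam G (FEq s t) -> deriv Lam G (FEq t s)
| D_Trans : forall G s t u,
    deriv Lam G (FEq s t) -> deriv Lam G (FEq t u) -> deriv Lam G (FEq s u)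
| D_Sub : forall G psi (sigma : X -> term),
    deriv Lam G psi -> deriv Lam (fset_subst sigma G) (fsubst sigma psi)
| D_Cong : forall G (f : op_sym Sg) (t s : 'I_(ar f) -> term),
    (forall i, deriv Lam G (FEq (t i) (s i))) -> deriv Lam G (FEq (@TOp f t) (@TOp f s))
| D_Inf : forall G t, deriv Lam G (FMem (@fbot H) t)
| D_Mon : forall G l l' t, deriv Lam G (FMem l t) -> deriv Lam G (FMem (fmeet l l') t)
| D_Exp : forall G (f : op_sym Sg) (l : 'I_(ar f) -> H) (t : 'I_(ar f) -> term),
    (forall i, deriv Lam G (FMem (l i) (t i))) ->
    deriv Lam G (FMem (fmeetn l) (@TOp f t))
| D_Sup : forall G (S : H -> Prop) t,
    (forall l, S l -> deriv Lam G (FMem l t)) -> deriv Lam G (FMem (fsup S) t)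
| D_Fun : forall G t s l,
    deriv Lam G (FEq t s) -> deriv Lam G (FMem l t) -> deriv Lam G (FMem l s).

Definition provable (Lam : theory) (phi : formula) : Prop := deriv Lam fset_empty phi.

End Syntax.

Record algebra (H : frame) (Sg : signature) := Algebra {
  acar : Type;
  amu : acar -> H;
  aop : forall f : op_sym Sg, ('I_(ar f) -> acar) -> acar;
  (* f^A is an arrow (A,mu)^n -> (A,mu) of Fuz_H *)
  aop_arrow : forall f (a : 'I_(ar f) -> acar),
      fle (fmeetn (fun i => amu (a i))) (amu (aop (f:=f) a));
  aconst : const_sym Sg -> acar
}.

Section Semantics.
Variables (H : frame) (Sg : signature) (X : Type) (A : algebra H Sg).

Fixpoint teval (iota : X -> acar A) (t : term Sg X) : acar A :=
  match t with
  | TVar x => iota x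
  | TConst c => aconst A c
  | TOp f args => @aop _ _ A f (fun i => teval iota (args i))
  end.

Definition sat_at (iota : X -> acar A) (phi : formula Sg X H) : Prop :=
  match phi with
  | FEq s t => teval iota s = teval iota t
  | FMem l t => fle l (amu (teval iota t))
  end.

Definition valid (phi : formula Sg X H) : Prop := forall iota, sat_at iota phi.

Definition sat_sequent (G : fset Sg X H) (psi : formula Sg X H) : Prop :=
  forall iota, (forall phi, G phi -> sat_at iota phi) -> sat_at iota psi.

Definition is_model (Lam : theory Sg X H) : Prop :=
  forall G psi, Lam G psi -> sat_sequent G psi.
End Semantics.

From mathcomp Require Import all_boot.
From Stdlib Require Import FunctionalExtensionality PropExtensionality IndefiniteDescription ProofIrrelevance.
Set Implicit Arguments. Unset Strict Implicit.

(* Soundness is a rule-by-rule check, (Exp) being exactly the arrow condition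
   on the operations of an algebra.  For completeness take the term model:
   terms modulo provable equality, where the class of t has membership degree
   sup { l | |-_Lam E_l(t) }.  Rule (Sup) makes that supremum itself provable
   and (Mon) makes the set downward closed, so under an assignment x |-> [s_x]
   a formula holds in the term model iff its instance under x |-> s_x is
   provable.  By (Sub) and (Cut) the term model is a model of Lam, and the
   assignment x |-> [x] turns validity of phi there into |-_Lam phi. *)

Section FrameFacts.
Variable H : frame.

Lemma finf_lb (S : H -> Prop) s : S s -> fle (finf S) s.
Proof. by move=> Ss; apply: fsup_lub => l; apply. Qed.

Lemma finf_glb (S : H -> Prop) c : (forall s, S s -> fle c s) -> fle c (finf S).
Proof. exact: (fsup_ub (S := fun l => forall s, S s -> fle l s)). Qed.

Lemma fbot_le (x : H) : fle (fbot H) x.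
Proof. by apply: fsup_lub. Qed.

Lemma fmeet_idr (a b : H) : fle b a -> fmeet a b = b.
Proof.
move=> ba; apply: fle_antisym; first exact: fmeet_r.
by apply: fmeet_glb => //; apply: fle_refl.
Qed.

End FrameFacts.

Section Substitution.
Variables (H : frame) (Sg : signature) (X : Type).

Lemma tsubst_id (t : term Sg X) : tsubst (@TVar Sg X) t = t.
Proof.
elim: t => [x|c|f args IH] //=; congr TOp.
by apply: functional_extensionality => i; apply: IH.
Qed.

Lemma fsubst_id (phi : formula Sg X H) : fsubst (@TVar Sg X) phi = phi.
Proof. by case: phi => [s t|l t] /=; rewrite !tsubst_id. Qed.

Variables (A : algebra H Sg) (iota : X -> acar A) (sigma : X -> term Sg X).

Lemma teval_subst (t : term Sg X) :
  teval iota (tsubst sigma t) = teval (fun x => teval iota (sigma x)) t.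
Proof.
elim: t => [x|c|f args IH] //=; congr aop.
by apply: functional_extensionality => i; apply: IH.
Qed.

Lemma sat_at_subst (phi : formula Sg X H) :
  sat_at iota (fsubst sigma phi) <-> sat_at (fun x => teval iota (sigma x)) phi.
Proof. by case: phi => [s t|l t] /=; rewrite !teval_subst. Qed.

End Substitution.

Lemma deriv_sound (H : frame) (Sg : signature) (X : Type) (A : algebra H Sg)
    (Lam : theory Sg X H) (G : fset Sg X H) (psi : formula Sg X H) :
  is_model A Lam -> deriv Lam G psi -> sat_sequent A G psi.
Proof.
move=> modelA; elim=> {G psi}.
- by move=> G psi; apply: modelA.
- by move=> G phi Gphi iota; apply.
- by move=> G D phi _ IH iota Giota; apply: IH => p Gp; apply: Giota; left.
- by move=> G Phi psi _ IHPhi _ IH iota Giota; apply: IH => p /IHPhi; apply.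
- by [].
- by move=> G s t _ IH iota Giota /=; rewrite (IH iota Giota).
- by move=> G s t u _ IHst _ IHtu iota Giota /=; rewrite IHst ?IHtu.
- move=> G psi sigma _ IH iota Giota; apply/sat_at_subst; apply: IH => p Gp.
  by apply/sat_at_subst; apply: Giota; exists p.
- move=> G f t s _ IH iota Giota /=; congr aop.
  by apply: functional_extensionality => i; apply: IH.
- by move=> G t iota _ /=; apply: fbot_le.
- by move=> G l l' t _ IH iota Giota /=; exact: fle_trans (fmeet_l _ _) (IH iota Giota).
- move=> G f l t _ IH iota Giota /=; apply: fle_trans (aop_arrow _).
  apply: finf_glb => _ [i ->]; apply: fle_trans (IH i iota Giota).
  by apply: finf_lb; exists i.
- by move=> G S t _ IH iota Giota /=; apply: fsup_lub => l Sl; apply: IH.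
- by move=> G t s l _ IHeq _ IH iota Giota /=; rewrite -(IHeq _ Giota); apply: IH.
Qed.

Section TermModel.
Variables (H : frame) (Sg : signature) (X : Type) (Lam : theory Sg X H).

Definition prov_class (t : term Sg X) : term Sg X -> Prop :=
  fun u => provable Lam (FEq H t u).

(* The quotient by provable equality, encoded by the equivalence classes
   themselves; representatives are chosen by indefinite description. *)
Definition term_quot := {P : term Sg X -> Prop | exists t, P = prov_class t}.

Definition class_of (t : term Sg X) : term_quot :=
  exist _ (prov_class t) (ex_intro _ t erefl).

Definition repr_of (a : term_quot) : term Sg X :=
  proj1_sig (constructive_indefinite_description _ (proj2_sig a)).

Lemma repr_ofK (a : term_quot) : class_of (repr_of a) = a.
Proof.
rewrite /repr_of; case: constructive_indefinite_description => t /= e.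
case: a e => P pP /= e; subst P; congr exist; exact: proof_irrelevance.
Qed.

Lemma class_of_eq (s t : term Sg X) :
  class_of s = class_of t <-> provable Lam (FEq H s t).
Proof.
split=> [e | st].
- have : prov_class t t by apply: D_Refl.
  by rewrite -[prov_class t]/(proj1_sig (class_of t)) -e.
- apply: eq_sig_hprop => [P p q | /=]; first exact: proof_irrelevance.
  apply: functional_extensionality => u; apply: propositional_extensionality.
  by split; [apply: D_Trans (D_Sym st) | apply: D_Trans st].
Qed.

Lemma provable_repr_of (t : term Sg X) :
  provable Lam (FEq H t (repr_of (class_of t))).
Proof. by apply/class_of_eq; rewrite repr_ofK. Qed.

Definition term_mu (a : term_quot) : H :=
  fsup (fun l => provable Lam (FMem l (repr_of a))).

Lemma provable_term_mu (a : term_quot) : provable Lam (FMem (term_mu a) (repr_of a)).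
Proof. by apply: D_Sup. Qed.

Lemma le_term_mu (a : term_quot) l :
  fle l (term_mu a) <-> provable Lam (FMem l (repr_of a)).
Proof.
split=> [la | la]; last exact: (fsup_ub (S := fun l => provable Lam (FMem l _))).
by rewrite -(fmeet_idr la); apply: D_Mon; apply: provable_term_mu.
Qed.

Definition term_op (f : op_sym Sg) (a : 'I_(ar f) -> term_quot) : term_quot :=
  class_of (TOp (fun i => repr_of (a i))).

Lemma term_op_arrow (f : op_sym Sg) (a : 'I_(ar f) -> term_quot) :
  fle (fmeetn (fun i => term_mu (a i))) (term_mu (term_op a)).
Proof.
apply/le_term_mu; apply: D_Fun (provable_repr_of _) _.
by apply: D_Exp => i; apply: provable_term_mu.
Qed.

Definition term_algebra : algebra H Sg :=
  Algebra term_op_arrow (fun c => class_of (TConst X c)).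

Section Assignment.
Variable sigma : X -> term Sg X.
Let iota (x : X) : acar term_algebra := class_of (sigma x).

Lemma teval_term_algebra (t : term Sg X) : teval iota t = class_of (tsubst sigma t).
Proof.
elim: t => [x|c|f args IH] //=.
rewrite (functional_extensionality _ _ IH); apply/class_of_eq.
by apply: D_Cong => i; apply: D_Sym; apply: provable_repr_of.
Qed.

Lemma sat_term_algebra (phi : formula Sg X H) :
  sat_at iota phi <-> provable Lam (fsubst sigma phi).
Proof.
case: phi => [s t|l t] /=; rewrite !teval_term_algebra; first exact: class_of_eq.
rewrite le_term_mu.
have e := provable_repr_of (tsubst sigma t).
by split=> h; apply: D_Fun h => //; apply: D_Sym.
Qed.

End Assignment.

Lemma sat_term_algebraE (iota : X -> term_quot) (phi : formula Sg X H) :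
  sat_at (A := term_algebra) iota phi <->
  provable Lam (fsubst (fun x => repr_of (iota x)) phi).
Proof.
rewrite -sat_term_algebra.
suff -> : (fun x => class_of (repr_of (iota x))) = iota by [].
by apply: functional_extensionality => x; rewrite repr_ofK.
Qed.

Lemma term_algebra_model : is_model term_algebra Lam.
Proof.
move=> G psi Lam_psi iota Giota; apply/sat_term_algebraE.
apply: D_Cut (D_Sub _ (D_theory Lam_psi)) => _ [p [Gp ->]].
by apply/sat_term_algebraE; apply: Giota.
Qed.

End TermModel.

Theorem corollary26 (H : frame) (Sg : signature) (X : Type)
    (Lam : theory Sg X H) (phi : formula Sg X H) :
  (forall A : algebra H Sg, is_model A Lam -> valid A phi) <-> provable Lam phi.
Proof.
split=> [valid_phi | prov_phi A modelA iota].
- have := valid_phi _ (@term_algebra_model H Sg X Lam) (fun x => class_of Lam (TVar Sg x)).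
  by rewrite sat_term_algebra fsubst_id.
- by apply: (deriv_sound modelA prov_phi) => p [].
Qed.
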